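(* Let $n\ge1$ and let $\mathcal{T}_n$ be the set of complete monotone triangles with $n$ rows. For $A=(a_{i,j})\in\mathcal{T}_n$ define arrays $\mathrm{AD}(A)=(b_{i,j})$, $\mathrm{R}(A)=(c_{i,j})$ and $\mathrm{H}(A)=(d_{i,j})$, $1\le i\le j\le n$, by: $b_{i,j}$ = the number of entries $x$ of the $j$-th SE-diagonal of $A$ with $x\ge i$; $c_{i,j}$ = the number of entries $x$ of the $(n+1-j)$-th NE-diagonal of $A$ with $x\le n+1-i$; $\mathrm{H}(A)$ is the array determined by the condition that for every $i\in\{1,\ldots,n\}$, $\{a_{i,i},a_{i,i+1},\ldots,a_{i,n}\}\cup\{d_{n+2-i,n+2-i},d_{n+2-i,n+3-i},\ldots,d_{n+2-i,n}\}=\{1,2,\ldots,n\}$ (for $i=1$ the second set is empty). Then $\mathrm{AD}$, $\mathrm{R}$ and $\mathrm{H}$ are well-defined permutations of $\mathcal{T}_n$, and $\mathrm{AD}=\mathrm{H}\circ\mathrm{R}$.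
   Context: A monotone triangle with $n$ rows is an array of integers $(a_{i,j})_{1\le i\le j\le n}$ such that $a_{i,j}\le a_{i+1,j+1}$ for $1\le i\le j<n$, $a_{i,j}\le a_{i-1,j}$ for $1<i\le j\le n$, and $a_{i,j}<a_{i,j+1}$ for $1\le i\le j\le n-1$. Its $i$-th row (counted from the bottom) is $(a_{i,i},\ldots,a_{i,n})$. It is complete if its bottom row $(a_{1,1},\ldots,a_{1,n})$ equals $(1,2,\ldots,n)$. For $1\le l\le n$, the $l$-th SE-diagonal of $(a_{i,j})$ is the sequence $(a_{l,l},a_{l-1,l},\ldots,a_{1,l})$, and the $l$-th NE-diagonal is the sequence $(a_{1,l},a_{2,l+1},\ldots,a_{n-l+1,n})$. *)

From mathcomp Require Import all_boot.
Set Implicit Arguments. Unset Strict Implicit. Unset Printing Implicit Defensive.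

(* An array (a_{i,j}) indexed 1-based; only entries with 1 <= i <= j <= n matter.
   Convention: an array "in T_n" is zero outside its domain, so that equality of
   arrays is Leibniz equality of functions. *)
Definition arr := nat -> nat -> nat.

Definition in_dom (n i j : nat) : bool := [&& 1 <= i, i <= j & j <= n].

Definition monotone_triangle (n : nat) (a : arr) : Prop :=
  (forall i j, 1 <= i -> i <= j -> j < n -> a i j <= a i.+1 j.+1) /\
  (forall i j, 1 < i -> i <= j -> j <= n -> a i j <= a i.-1 j) /\
  (forall i j, 1 <= i -> i <= j -> j <= n - 1 -> a i j < a i j.+1).

Definition complete (n : nat) (a : arr) : Prop :=
  forall j, 1 <= j <= n -> a 1 j = j.

Definition inT (n : nat) (a : arr) : Prop :=
  monotone_triangle n a /\ complete n a /\
  (forall i j, ~~ in_dom n i j -> a i j = 0).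

(* row i of a (counted from the bottom): (a_{i,i},...,a_{i,n}) *)
Definition row (n : nat) (a : arr) (i : nat) : seq nat :=
  [seq a i m | m <- iota i (n.+1 - i)].

Definition SEdiag (a : arr) (j : nat) : seq nat := [seq a k j | k <- iota 1 j].

Definition NEdiag (n : nat) (a : arr) (l : nat) : seq nat :=
  [seq a k (l + k).-1 | k <- iota 1 (n.+1 - l)].

Definition AD (n : nat) (a : arr) : arr := fun i j =>
  if in_dom n i j then count (fun x => i <= x) (SEdiag a j) else 0.

Definition Rmap (n : nat) (a : arr) : arr := fun i j =>
  if in_dom n i j then count (fun x => x <= n.+1 - i) (NEdiag n a (n.+1 - j)) else 0.

(* Row k of H(A) is the increasing enumeration of {1..n} minus the entries of
   row n+2-k of A (for k = 1 the latter row is empty, giving (1,...,n)). *)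
Definition Hrow (n : nat) (a : arr) (k : nat) : seq nat :=
  [seq x <- iota 1 n | x \notin row n a (n.+2 - k)].

Definition Hmap (n : nat) (a : arr) : arr := fun i j =>
  if in_dom n i j then nth 0 (Hrow n a i) (j - i) else 0.

Definition perm_of_T (n : nat) (f : arr -> arr) : Prop :=
  (forall a, inT n a -> inT n (f a)) /\
  (forall a b, inT n a -> inT n b -> f a = f b -> a = b) /\
  (forall b, inT n b -> exists a, inT n a /\ f a = b).

From mathcomp Require Import all_boot zify.
From Stdlib Require Import FunctionalExtensionality.
Set Implicit Arguments. Unset Strict Implicit. Unset Printing Implicit Defensive.

(* Every map is analysed through "threshold" characterisations:
   an entry e <= j of an array is determined by the truth values of e <= y
   for y < j, and for the three maps these truth values are expressed by
   counting entries of A that lie below a bound.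
   - AD:  AD(A)_{i,j} <= y  iff  a_{y+1,j} < i, which is symmetric in the roles
     of i and the entry; hence AD is an involution of T_n.
   - H:   row k of H(A) is the complement in {1..n} of row n+2-k of A, so the
     number of its entries <= x is x minus the corresponding count for A.
     Rows of a monotone triangle interlace (consecutive counts differ by at
     most one), which makes H(A) monotone; and H is an involution.
   - R:   R(A)_{i,j} <= y iff row y+1 of A has at most n-j entries <= n+1-i.
     A counting identity relating rows of AD(A) to rows of A then gives
     R = H o AD on T_n, hence AD = H o R since H is an involution. *)

Lemma sorted_nth_leq (s : seq nat) t x : sorted ltn s -> t < size s ->
  (nth 0 s t <= x) = (t < count (fun z => z <= x) s).
Proof.
elim: s t => [|h s IH] t //= s_sorted t_lt.
have h_min : forall z, z \in s -> h < z.
  by move=> z; apply/allP: z; exact: (order_path_min ltn_trans s_sorted).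
have [h_le|x_lt] := leqP h x.
  case: t t_lt => [|t] t_lt /=; first by rewrite h_le.
  by rewrite IH ?(path_sorted s_sorted) // add1n ltnS.
have -> : count (fun z => z <= x) s = 0.
  apply/eqP; rewrite -leqn0 leqNgt -has_count; apply/hasP => -[z /h_min]; lia.
rewrite /= addn0 ltn0; apply/negbTE; rewrite -ltnNge.
case: t t_lt => [|t] t_lt //=.
exact: ltn_trans x_lt (h_min _ (mem_nth 0 (t_lt : t < size s))).
Qed.

(* Counting a predicate that is downward closed along the interval
   [m, m + len): it holds exactly on an initial segment, whose length is
   then read off from the first point where the predicate fails. *)
Section DownwardClosedCount.
Variables (P : pred nat) (m len : nat).
Hypothesis P_down : forall k, m <= k -> k.+1 < m + len -> P k.+1 -> P k.

Lemma down_closed k k' : m <= k' <= k -> k < m + len -> P k -> P k'.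
Proof.
move=> /andP [mk' k'k]; rewrite -(subnK k'k); elim: (k - k') => [|d IH] lt_len Pk //.
by apply: IH; [lia | apply: P_down; rewrite ?addSn //; lia].
Qed.

Lemma count_iota_down y : y < len -> (count P (iota m len) <= y) = ~~ P (m + y).
Proof.
move=> y_lt; rewrite -(subnKC (ltnW y_lt)) iotaD count_cat.
have [Py|nPy] := boolP (P (m + y)).
- have -> : count P (iota m y) = y.
    rewrite (eq_in_count (a2 := predT)) ?count_predT ?size_iota //.
    move=> k; rewrite mem_iota => k_in; apply: (down_closed (k := m + y)); lia.
  rewrite -(subnSK y_lt) /= Py; lia.
- have -> : count P (iota (m + y) (len - y)) = 0.
    apply/eqP; rewrite -leqn0 leqNgt -has_count; apply/hasP => -[k].
    rewrite mem_iota => k_in Pk; move/negP: nPy; apply.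
    apply: (down_closed (k := k)) => //; lia.
  by rewrite addn0 (leq_trans (count_size _ _)) ?size_iota.
Qed.

End DownwardClosedCount.

Lemma eq_from_thresholds (u v j : nat) : u <= j -> v <= j ->
  (forall y, y < j -> (u <= y) = (v <= y)) -> u = v.
Proof.
move=> u_le v_le same; apply/eqP; rewrite eqn_leq; apply/andP; split.
  by have [v_lt|] := ltnP v j; [rewrite same | lia].
by have [u_lt|] := ltnP u j; [rewrite -same | lia].
Qed.

Lemma sorted_map_iota (f : nat -> nat) k len :
  (forall m, k <= m -> m.+1 < k + len -> f m < f m.+1) ->
  sorted ltn [seq f m | m <- iota k len].
Proof.
elim: len k => [|l IH] k f_incr //=.
case: l IH f_incr => [|l] IH f_incr //=.
rewrite f_incr ?addnS ?ltnS ?leq_addr //=.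
by apply: (IH k.+1) => p kp lt; apply: f_incr; lia.
Qed.

Lemma nth_map_iota (f : nat -> nat) k len p : k <= p -> p < k + len ->
  nth 0 [seq f m | m <- iota k len] (p - k) = f p.
Proof.
move=> kp p_lt; rewrite (nth_map 0) ?size_iota; last lia.
by rewrite nth_iota ?subnKC //; lia.
Qed.

Lemma map_nth_iota (s : seq nat) m :
  [seq nth 0 s (p - m) | p <- iota m (size s)] = s.
Proof.
rewrite -[m]addn0 iotaDl -map_comp -[RHS](mkseq_nth 0).
by apply: eq_map => p /=; rewrite addn0 addKn.
Qed.

Lemma count_leq_iota x n : x <= n -> count (fun z => z <= x) (iota 1 n) = x.
Proof.
move=> x_le; rewrite -(subnKC x_le) iotaD count_cat.
rewrite (eq_in_count (a2 := predT)); last by move=> z; rewrite mem_iota /=; lia.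
rewrite count_predT size_iota (eq_in_count (a2 := pred0)) ?count_pred0 ?addn0 //.
by move=> z; rewrite mem_iota /=; lia.
Qed.

Lemma filter_mem_iota (s : seq nat) n : sorted ltn s ->
  (forall z, z \in s -> 1 <= z <= n) -> [seq z <- iota 1 n | z \in s] = s.
Proof.
move=> s_sorted s_range; apply: (irr_sorted_eq ltn_trans ltnn) => //.
  exact: (sorted_filter ltn_trans _ (iota_ltn_sorted _ _)).
move=> z; rewrite mem_filter mem_iota.
by case: (boolP (z \in s)) => //= /s_range.
Qed.

Lemma count_leq_compl (s : seq nat) n x : sorted ltn s ->
  (forall z, z \in s -> 1 <= z <= n) -> x <= n ->
  count (fun z => z <= x) [seq z <- iota 1 n | z \notin s] +
  count (fun z => z <= x) s = x.
Proof.
move=> s_sorted s_range x_le.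
rewrite -{2}(filter_mem_iota s_sorted s_range) -[RHS](count_leq_iota (n := n)) //.
by elim: (iota 1 n) => //= z l <-; case: (z \in s) => /=; lia.
Qed.

Definition row_count (n : nat) (a : arr) (k x : nat) : nat :=
  count (fun z => z <= x) (row n a k).

Lemma in_dom_true n i j : 1 <= i <= j -> j <= n -> in_dom n i j = true.
Proof. by rewrite /in_dom; lia. Qed.

Section MonotoneTriangle.
Variables (n : nat) (a : arr).
Hypothesis a_in : inT n a.

Lemma tri_NE i j : 1 <= i -> i <= j -> j < n -> a i j <= a i.+1 j.+1.
Proof. by case: a_in => [[NE _] _]; apply: NE. Qed.

Lemma tri_col i j : 1 < i -> i <= j -> j <= n -> a i j <= a i.-1 j.
Proof. by case: a_in => [[_ [col _]] _]; apply: col. Qed.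

Lemma tri_row i j : 1 <= i -> i <= j -> j <= n - 1 -> a i j < a i j.+1.
Proof. by case: a_in => [[_ [_ rw]] _]; apply: rw. Qed.

Lemma tri_bottom j : 1 <= j <= n -> a 1 j = j.
Proof. by case: a_in => [_ [bot _]]; apply: bot. Qed.

Lemma tri_zero i j : ~~ in_dom n i j -> a i j = 0.
Proof. by case: a_in => [_ [_ zero]]; apply: zero. Qed.

(* Going down the column to the bottom row: a_{k,p} <= p. *)
Lemma entry_le k p : 1 <= k <= p -> p <= n -> a k p <= p.
Proof.
elim: k => [|k IH] // k_range p_le.
case: k IH k_range => [|k] IH k_range; first by rewrite tri_bottom //; lia.
have col := @tri_col k.+2 p isT ltac:(lia) ltac:(lia).
exact: leq_trans col (IH ltac:(lia) p_le).
Qed.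

(* Going down the NE-diagonal to the bottom row: a_{k,p} > p - k. *)
Lemma entry_gt k p : 1 <= k <= p -> p <= n -> p < a k p + k.
Proof.
elim: k p => [|k IH] p // k_range p_le.
case: k IH k_range => [|k] IH k_range; first by rewrite tri_bottom ?addn1 //; lia.
have lower := IH p.-1 ltac:(lia) ltac:(lia).
have := @tri_NE k.+1 p.-1 isT ltac:(lia) ltac:(lia); rewrite prednK; lia.
Qed.

Lemma entry_pos k p : 1 <= k <= p -> p <= n -> 0 < a k p.
Proof. by move=> k_range p_le; have := entry_gt k_range p_le; lia. Qed.

Lemma row_sorted k : 1 <= k -> sorted ltn (row n a k).
Proof. by move=> k_ge; apply: sorted_map_iota => m *; apply: tri_row; lia. Qed.

Lemma row_range k z : 1 <= k -> z \in row n a k -> 1 <= z <= n.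
Proof.
move=> k_ge /mapP [p]; rewrite mem_iota => p_range ->.
have := @entry_le k p ltac:(lia) ltac:(lia); have := @entry_pos k p ltac:(lia) ltac:(lia).
lia.
Qed.

Lemma size_row k : size (row n a k) = n.+1 - k.
Proof. by rewrite size_map size_iota. Qed.

Lemma row_count_le k x : row_count n a k x <= n.+1 - k.
Proof. by rewrite -size_row count_size. Qed.

Lemma entry_leq_row_count k p x : 1 <= k <= p -> p <= n ->
  (a k p <= x) = (p - k < row_count n a k x).
Proof.
move=> k_range p_le; rewrite -sorted_nth_leq ?row_sorted ?size_row; try lia.
by rewrite nth_map_iota //; lia.
Qed.

Lemma row_past_top : row n a n.+1 = [::].
Proof. by rewrite /row subnn. Qed.

Lemma rows_interlace k x : 1 <= k <= n ->
  row_count n a k.+1 x <= row_count n a k x <= (row_count n a k.+1 x).+1.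
Proof.
move=> k_range.
have [k_lt|k_ge] := ltnP k n; last first.
  have := row_count_le k x; rewrite (_ : k = n) /row_count ?row_past_top /=; lia.
apply/andP; split.
- move Es : (row_count n a k.+1 x) (row_count_le k.+1 x) => s s_le.
  have [->//|s_pos] := posnP s.
  have top : a k.+1 (k + s) <= x by rewrite entry_leq_row_count ?Es; lia.
  have := @tri_NE k (k + s).-1 ltac:(lia) ltac:(lia) ltac:(lia).
  rewrite prednK; last lia.
  move=> /leq_trans /(_ top); rewrite entry_leq_row_count; lia.
- move Et : (row_count n a k x) (row_count_le k x) => t t_le.
  have [|t_gt] := leqP t 1; first lia.
  have below : a k (k + t).-1 <= x by rewrite entry_leq_row_count ?Et; lia.
  have := @tri_col k.+1 (k + t).-1 ltac:(lia) ltac:(lia) ltac:(lia).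
  move=> /leq_trans /(_ below); rewrite entry_leq_row_count; lia.
Qed.

End MonotoneTriangle.


Lemma AD_le n a i j : AD n a i j <= j.
Proof.
rewrite /AD; case: in_dom => //.
by rewrite (leq_trans (count_size _ _)) // size_map size_iota.
Qed.

(* Threshold form of AD: the j-th SE-diagonal is weakly decreasing upwards,
   so AD(a)_{i,j} <= y iff its (y+1)-th entry from the bottom is below i. *)
Lemma AD_leq n a i j y : inT n a -> 1 <= i <= j -> j <= n -> y < j ->
  (AD n a i j <= y) = (a y.+1 j < i).
Proof.
move=> a_in i_range j_le y_lt.
rewrite /AD in_dom_true // /SEdiag count_map.
rewrite (@count_iota_down (fun k => i <= a k j) 1 j) //; first by rewrite add1n ltnNge.
move=> k k_ge k_lt /= /leq_trans; apply; apply: (tri_col a_in); lia.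
Qed.

(* AD maps T_n to itself: each monotonicity condition of AD(a) is, through
   AD_leq, a monotonicity condition of a. *)
Lemma AD_inT n a : inT n a -> inT n (AD n a).
Proof.
move=> a_in; split; [split; [|split] | split].
- move=> i j i_ge ij j_lt; set y := AD n a i.+1 j.+1.
  have [|y_lt] := leqP j y; first exact: leq_trans (AD_le _ _ _ _).
  have : a y.+1 j.+1 < i.+1 by rewrite -(AD_leq a_in); lia.
  rewrite AD_leq //; try lia.
  have := @tri_row _ _ a_in y.+1 j ltac:(lia) ltac:(lia) ltac:(lia); lia.
- move=> i j i_gt ij j_le; rewrite /AD !in_dom_true; try lia.
  by apply: sub_count => z /=; lia.
- move=> i j i_ge ij j_le; have y_le := AD_le n a i j; set y := AD n a i j in y_le *.
  have y_pos : 0 < y.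
    rewrite lt0n; apply/negP => /eqP y0.
    have : AD n a i j <= 0 by rewrite -/y y0.
    rewrite (AD_leq a_in) ?(tri_bottom a_in) //; lia.
  have i_le : i <= a y j.
    have : ~~ (AD n a i j <= y.-1) by rewrite -/y -ltnNge prednK.
    by rewrite (AD_leq a_in) ?prednK -?leqNgt //; lia.
  rewrite ltnNge (AD_leq a_in) -?leqNgt; try lia.
  by apply: leq_trans i_le _; apply: (tri_NE a_in); lia.
- move=> j j_range; rewrite /AD in_dom_true /= ?/SEdiag ?count_map; try lia.
  rewrite (eq_in_count (a2 := predT)) ?count_predT ?size_iota //; try lia.
  move=> k; rewrite mem_iota => k_range; apply: (entry_pos a_in); lia.
- by move=> i j /negbTE out; rewrite /AD out.
Qed.

(* AD is an involution: the threshold condition of AD_leq is symmetric. *)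
Lemma AD_involutive n a : inT n a -> AD n (AD n a) = a.
Proof.
move=> a_in; have ad_in := AD_inT a_in.
apply: functional_extensionality => i; apply: functional_extensionality => j.
have [/and3P [i_ge ij j_le]|out] := boolP (in_dom n i j); last first.
  by rewrite /AD (negbTE out) (tri_zero a_in).
apply: (@eq_from_thresholds _ _ j); rewrite ?AD_le ?(entry_le a_in) //; try lia.
move=> x x_lt; rewrite AD_leq //; try lia.
rewrite -(prednK i_ge) ltnS AD_leq ?prednK //; lia.
Qed.


Lemma Hrow_sorted n a k : sorted ltn (Hrow n a k).
Proof. exact: (sorted_filter ltn_trans _ (iota_ltn_sorted _ _)). Qed.

Lemma Hrow_range n a k z : z \in Hrow n a k -> 1 <= z <= n.
Proof. by rewrite mem_filter mem_iota => /andP [_]; lia. Qed.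

(* Row k of H(a) and row n+2-k of a split {1..n}, so their counts below x
   add up to x. *)
Lemma Hrow_count n a k x : inT n a -> 1 <= k <= n.+1 -> x <= n ->
  count (fun z => z <= x) (Hrow n a k) + row_count n a (n.+2 - k) x = x.
Proof.
move=> a_in k_range x_le; apply: count_leq_compl => //.
- by apply: (row_sorted a_in); lia.
- by move=> z; apply: (row_range a_in); lia.
Qed.

Lemma size_Hrow n a k : inT n a -> 1 <= k <= n.+1 -> size (Hrow n a k) = n.+1 - k.
Proof.
move=> a_in k_range; have := Hrow_count a_in k_range (leqnn n).
rewrite (eq_in_count (a2 := predT)) ?count_predT; last first.
  by move=> z /Hrow_range /=; lia.
rewrite /row_count (eq_in_count (a2 := predT)) ?count_predT ?size_row.
  by set s := size _; lia.
by move=> z /(row_range a_in) /=; lia.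
Qed.

Lemma H_leq n a i j x : inT n a -> 1 <= i <= j -> j <= n ->
  (Hmap n a i j <= x) = (j - i < count (fun z => z <= x) (Hrow n a i)).
Proof.
move=> a_in i_range j_le; rewrite /Hmap in_dom_true //.
by rewrite sorted_nth_leq ?Hrow_sorted ?size_Hrow //; lia.
Qed.

Lemma Hmap_le n a i j : inT n a -> Hmap n a i j <= n.
Proof.
move=> a_in; rewrite /Hmap; case: ifP => // /and3P [i_ge ij j_le].
have : nth 0 (Hrow n a i) (j - i) \in Hrow n a i.
  by apply: mem_nth; rewrite size_Hrow //; lia.
by move/Hrow_range; lia.
Qed.

(* Interlacing of the rows of a turns into monotonicity of H(a). *)
Lemma H_inT n a : inT n a -> inT n (Hmap n a).
Proof.
move=> a_in; split; [split; [|split] | split].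
- move=> i j i_ge ij j_lt; set x := Hmap n a i.+1 j.+1.
  have x_le : x <= n := Hmap_le _ _ a_in.
  have : j.+1 - i.+1 < count (fun z => z <= x) (Hrow n a i.+1).
    by rewrite -H_leq //; lia.
  rewrite H_leq //; try lia.
  have := Hrow_count (k := i) a_in ltac:(lia) x_le.
  have := Hrow_count (k := i.+1) a_in ltac:(lia) x_le.
  have := rows_interlace a_in (k := n.+1 - i) x ltac:(lia).
  by rewrite (_ : n.+2 - i = (n.+1 - i).+1) ?subSS; lia.
- move=> i j i_gt ij j_le; set x := Hmap n a i.-1 j.
  have x_le : x <= n := Hmap_le _ _ a_in.
  have : j - i.-1 < count (fun z => z <= x) (Hrow n a i.-1).
    by rewrite -H_leq //; lia.
  rewrite H_leq //; try lia.
  have := Hrow_count (k := i) a_in ltac:(lia) x_le.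
  have := Hrow_count (k := i.-1) a_in ltac:(lia) x_le.
  have := rows_interlace a_in (k := n.+2 - i) x ltac:(lia).
  by rewrite (_ : n.+2 - i.-1 = (n.+2 - i).+1); lia.
- move=> i j i_ge ij j_lt; rewrite /Hmap !in_dom_true; try lia.
  apply: (sorted_ltn_nth ltn_trans 0 (Hrow_sorted n a i));
    rewrite ?inE ?size_Hrow //; lia.
- move=> j j_range; rewrite /Hmap in_dom_true /=; try lia.
  rewrite /Hrow subSS subn0 row_past_top /= filter_predT nth_iota; lia.
- by move=> i j /negbTE out; rewrite /Hmap out.
Qed.

Lemma row_Hmap n a k : inT n a -> 1 <= k <= n.+1 -> row n (Hmap n a) k = Hrow n a k.
Proof.
move=> a_in k_range; rewrite /row -[RHS](map_nth_iota _ k) size_Hrow //.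
apply/eq_in_map => p; rewrite mem_iota => p_range.
by rewrite /Hmap in_dom_true //; lia.
Qed.

Lemma H_complement n a i x : inT n a -> 1 <= i <= n ->
  (x \in row n a i) || (x \in row n (Hmap n a) (n.+2 - i)) = (1 <= x <= n).
Proof.
move=> a_in i_range; rewrite row_Hmap //; last lia.
rewrite /Hrow subKn ?mem_filter ?mem_iota; last lia.
have [x_in|] //= := boolP (x \in row n a i).
by have := row_range a_in (k := i) ltac:(lia) x_in; lia.
Qed.

(* Taking complements twice: H is an involution. *)
Lemma H_involutive n a : inT n a -> Hmap n (Hmap n a) = a.
Proof.
move=> a_in; apply: functional_extensionality => i; apply: functional_extensionality => j.
have [/and3P [i_ge ij j_le]|out] := boolP (in_dom n i j); last first.
  by rewrite /Hmap (negbTE out) (tri_zero a_in).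
have row_i : Hrow n (Hmap n a) i = row n a i.
  rewrite /Hrow row_Hmap //; last lia.
  rewrite /Hrow subKn; last lia.
  rewrite -[RHS](@filter_mem_iota _ n) ?(row_sorted a_in) //.
    by apply/eq_in_filter => z z_in; rewrite mem_filter z_in andbT negbK.
  by move=> z; apply: (row_range a_in).
rewrite /Hmap in_dom_true ?row_i ?nth_map_iota //; lia.
Qed.


Lemma R_le n a i j : j <= n -> Rmap n a i j <= j.
Proof.
move=> j_le; rewrite /Rmap; case: in_dom => //.
by rewrite (leq_trans (count_size _ _)) // size_map size_iota; lia.
Qed.

(* Threshold form of R: the (n+1-j)-th NE-diagonal is weakly increasing, so
   R(a)_{i,j} <= y iff its (y+1)-th entry exceeds n+1-i; that entry lies in
   row y+1 of a at position n-j, which turns the condition into a count. *)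
Lemma R_leq n a i j y : inT n a -> 1 <= i <= j -> j <= n -> y < j ->
  (Rmap n a i j <= y) = (row_count n a y.+1 (n.+1 - i) <= n - j).
Proof.
move=> a_in i_range j_le y_lt.
rewrite /Rmap in_dom_true // /NEdiag count_map (_ : n.+1 - (n.+1 - j) = j); last lia.
rewrite (@count_iota_down (fun k => a k (n.+1 - j + k).-1 <= n.+1 - i) 1 j) //.
  rewrite (_ : (n.+1 - j + (1 + y)).-1 = n - j + y.+1); last lia.
  by rewrite (entry_leq_row_count a_in) ?add1n ?addnK -?leqNgt //; lia.
move=> k k_ge k_lt /= /(leq_trans _); apply.
rewrite (_ : (n.+1 - j + k.+1).-1 = (n.+1 - j + k).-1.+1); last lia.
by apply: (tri_NE a_in); lia.
Qed.

(* The bottom row of R(a) is 1..n: all entries of a are at most n. *)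
Lemma R_bottom n a j : inT n a -> 1 <= j <= n -> Rmap n a 1 j = j.
Proof.
move=> a_in j_range; rewrite /Rmap in_dom_true /= /NEdiag ?count_map; try lia.
rewrite (_ : n.+1 - (n.+1 - j) = j); last lia.
rewrite (eq_in_count (a2 := predT)) ?count_predT ?size_iota //.
move=> k; rewrite mem_iota => k_range /=.
by have := @entry_le _ _ a_in k (n.+1 - j + k).-1 ltac:(lia) ltac:(lia); lia.
Qed.

(* Duality between rows of AD(a) and of a: for 2 <= m <= n and y < n, let U
   entries of row m of AD(a) be at most y and V entries of row y+1 of a be at
   most m-1.  Both runs end at the same column, U + m - 1 = V + y, because by
   AD_leq a column p > y carries an entry <= y in row m of AD(a) exactly when
   it carries an entry < m in row y+1 of a. *)
Lemma AD_row_count n a m y : inT n a -> 2 <= m <= n -> y < n ->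
  row_count n (AD n a) m y + m = row_count n a y.+1 m.-1 + y.+1.
Proof.
move=> a_in m_range y_lt; have ad_in := AD_inT a_in.
move EU : (row_count n (AD n a) m y) (row_count_le n (AD n a) m y) => U U_le.
move EV : (row_count n a y.+1 m.-1) (row_count_le n a y.+1 m.-1) => V V_le.
have V_ge : m.-1 <= V + y.
  have [|y_lt_m] := leqP m.-1 y; first lia.
  have := @entry_le _ _ a_in y.+1 m.-1 ltac:(lia) ltac:(lia).
  by rewrite (entry_leq_row_count a_in) ?EV; lia.
have same_end : forall p, m <= p <= n -> (p <= U + m.-1) = (p <= V + y).
  move=> p p_range.
  have -> : (p <= U + m.-1) = (AD n a m p <= y).
    by rewrite (entry_leq_row_count ad_in) ?EU; lia.
  have [p_le|y_lt_p] := leqP p y.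
    by rewrite (leq_trans (AD_le n a m p) p_le); lia.
  have lt_m : forall z, (z < m) = (z <= m.-1) by move=> z; lia.
  rewrite (AD_leq a_in) ?lt_m; try lia.
  by rewrite (entry_leq_row_count a_in) ?EV; lia.
have [lt|gt|same] := ltngtP (U + m.-1) (V + y); last lia.
- by have := same_end (U + m.-1).+1 ltac:(lia); rewrite ltnn lt.
- by have := same_end (V + y).+1 ltac:(lia); rewrite ltnn gt.
Qed.

Lemma R_eq_H_AD n a : inT n a -> Rmap n a = Hmap n (AD n a).
Proof.
move=> a_in; have ad_in := AD_inT a_in; have had_in := H_inT ad_in.
apply: functional_extensionality => i; apply: functional_extensionality => j.
have [/and3P [i_ge ij j_le]|out] := boolP (in_dom n i j); last first.
  by rewrite /Rmap /Hmap (negbTE out).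
have [i_le1|i_gt1] := leqP i 1.
  rewrite (_ : i = 1) ?R_bottom ?(tri_bottom had_in) //; lia.
apply: (@eq_from_thresholds _ _ j); rewrite ?R_le ?(entry_le had_in) //; try lia.
move=> y y_lt; rewrite (R_leq a_in) ?(H_leq _ ad_in); try lia.
have := Hrow_count (k := i) (x := y) ad_in ltac:(lia) ltac:(lia).
have := AD_row_count (m := n.+2 - i) (y := y) a_in ltac:(lia) ltac:(lia).
rewrite (_ : (n.+2 - i).-1 = n.+1 - i); lia.
Qed.


Lemma involution_perm_of_T n (f : arr -> arr) :
  (forall a, inT n a -> inT n (f a)) -> (forall a, inT n a -> f (f a) = a) ->
  perm_of_T n f.
Proof.
move=> f_in f_inv; split; [exact: f_in | split].
- by move=> a b a_in b_in fab; rewrite -(f_inv _ a_in) fab f_inv.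
- by move=> b b_in; exists (f b); split; [exact: f_in | exact: f_inv].
Qed.

Lemma perm_of_T_comp n (f g h : arr -> arr) : perm_of_T n f -> perm_of_T n g ->
  (forall a, inT n a -> h a = f (g a)) -> perm_of_T n h.
Proof.
move=> [f_in [f_inj f_surj]] [g_in [g_inj g_surj]] h_eq; split; [|split].
- by move=> a a_in; rewrite h_eq //; apply/f_in/g_in.
- move=> a b a_in b_in; rewrite (h_eq a a_in) (h_eq b b_in) => fg_eq.
  exact/g_inj/(f_inj _ _ (g_in a a_in) (g_in b b_in) fg_eq).
- move=> c c_in; have [b [b_in <-]] := f_surj c c_in.
  have [a [a_in <-]] := g_surj b b_in.
  by exists a; split; last exact: h_eq.
Qed.

Theorem mainTheorem2 (n : nat) (hn : 1 <= n) :
  perm_of_T n (AD n) /\ perm_of_T n (Rmap n) /\ perm_of_T n (Hmap n) /\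
  (* H(A) satisfies the defining condition of the paper *)
  (forall a, inT n a -> forall i, 1 <= i <= n -> forall x,
       (x \in row n a i) || (x \in row n (Hmap n a) (n.+2 - i)) = (1 <= x <= n)) /\
  (forall a, inT n a -> AD n a = Hmap n (Rmap n a)).
Proof.
have AD_perm : perm_of_T n (AD n).
  exact: involution_perm_of_T (@AD_inT n) (@AD_involutive n).
have H_perm : perm_of_T n (Hmap n).
  exact: involution_perm_of_T (@H_inT n) (@H_involutive n).
have R_perm : perm_of_T n (Rmap n).
  exact: perm_of_T_comp H_perm AD_perm (@R_eq_H_AD n).
split; [done | split; [done | split; [done | split]]].
- by move=> a a_in i i_range x; apply: H_complement.
- by move=> a a_in; rewrite R_eq_H_AD // H_involutive //; apply: AD_inT.
Qed.
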